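(* Let $(\ell_n)_{n\in\mathbb N}$, $(\sigma_{n,0})_{n\in\mathbb N}$, $(\sigma_{n,1})_{n\in\mathbb N}$, $(\sigma_{n,-1})_{n\in\mathbb N}$ be sequences of strictly positive real numbers and let $(\kappa_n)_{n\in\mathbb N}$ be a sequence of real numbers. Then for every $x_0\in\mathbb R$ there exists at least one $x_1>0$ such that the sequence $(x_n)_{n\in\mathbb N}$ determined by $$\ell_n = x_n\big(\sigma_{n,1}x_{n+1}+\sigma_{n,0}x_n+\sigma_{n,-1}x_{n-1}\big)+\kappa_n x_n,\qquad n\in\mathbb N,$$ is well defined and positive, i.e. $x_n>0$ for all $n\in\mathbb N$.
   Context: $\mathbb N=\{1,2,3,\dots\}$. Since $\sigma_{n,1}>0$, the displayed equation, given $x_{n-1}$ and $x_n\neq 0$, determines $x_{n+1}$ uniquely; thus the sequence is determined recursively by $x_0$ and $x_1$ as long as no term $x_n$ with $n\ge 1$ vanishes. *)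

From Stdlib Require Import Reals.

From Stdlib Require Import Reals Lra Lia ClassicalEpsilon.
Open Scope R_scope.

(* Fix x 0 = x0 and regard x 1 = t as a parameter; the recurrence then defines
   x n = xs t n, where x (n+2) = residual (n+1) (x n) (x (n+1)) / (s1 (n+1) x (n+1)).
   The parameter is located by nested closed intervals (whose endpoints may come
   in either order).  A "bracket" of level n is an interval [e0, e1] on which
   x 1, ..., x (n+1) are positive, except that x (n+1) vanishes at e0, while
   x (n+2) is positive inside and vanishes at e1.  Near e0 the small positive
   x (n+1) makes x (n+2) huge, so the residual deciding the sign of x (n+3) is
   negative there; at e1 it equals l > 0.  Its first root r, going from e1
   towards e0, yields a bracket [e1, r] of level n+1 inside [e0, e1]. *)

Definition between (a b t : R) : Prop := Rmin a b <= t <= Rmax a b.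
Definition strictly_between (a b t : R) : Prop := Rmin a b < t < Rmax a b.

Ltac interval :=
  unfold between, strictly_between, Rmin, Rmax in *;
  repeat destruct (Rle_dec _ _); first [lra | intros ?; lra].

Ltac continuity_rules :=
  repeat first
    [ assumption
    | apply continuity_pt_div
    | apply continuity_pt_minus
    | apply continuity_pt_plus
    | apply continuity_pt_mult
    | apply continuity_pt_const; intros ? ?; reflexivity ].

Lemma continuity_pt_eps (f : R -> R) (x eps : R) : continuity_pt f x -> 0 < eps ->
  exists d, 0 < d /\ forall t, Rabs (t - x) < d -> Rabs (f t - f x) < eps.
Proof.
  intros Hf Heps. destruct (Hf eps Heps) as [d [Hd Hclose]].
  exists d; split; [exact Hd|]. intros t Ht.
  destruct (Req_dec t x) as [->|Hne].
  - rewrite Rminus_diag, Rabs_R0; exact Heps.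
  - apply Hclose. repeat split; auto.
Qed.

Lemma first_root_increasing (f : R -> R) (q p : R) :
  q < p -> (forall t, q <= t <= p -> continuity_pt f t) -> 0 < f q -> f p < 0 ->
  exists r, q < r < p /\ f r = 0 /\ forall t, q <= t < r -> 0 < f t.
Proof.
  intros Hqp Hcont Hq Hp.
  set (E := fun s => q <= s <= p /\ forall t, q <= t <= s -> 0 < f t).
  assert (Eq : E q) by (split; [lra | intros t Ht; replace t with q by lra; exact Hq]).
  assert (HE : bound E) by (exists p; intros s [Hs _]; lra).
  destruct (completeness E HE (ex_intro _ q Eq)) as [r [Hub Hlub]].
  assert (Hqr : q <= r) by (apply Hub; exact Eq).
  assert (Hrp : r <= p) by (apply Hlub; intros s [Hs _]; lra).
  assert (Hleft : forall t, q <= t < r -> 0 < f t).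
  { intros t Ht. destruct (classic (exists s, E s /\ t < s)) as [[s [[_ Hs] Hts]]|Hno].
    - apply Hs; lra.
    - assert (r <= t); [|lra]. apply Hlub. intros s Hs.
      apply Rnot_lt_le. intros Hts. apply Hno. exists s; split; assumption. }
  pose proof (Hcont r (conj Hqr Hrp)) as Hcr.
  assert (Hroot : f r = 0).
  { destruct (Rtotal_order (f r) 0) as [Hneg|[Hzero|Hpos]]; [exfalso| exact Hzero| exfalso].
    - destruct (continuity_pt_eps f r (- f r) Hcr) as [d [Hd Hnear]]; [lra|].
      assert (Hqr' : q < r) by (destruct (Req_dec q r); [subst; lra | lra]).
      set (t := Rmax q (r - d / 2)).
      assert (Ht : q <= t < r) by (unfold t, Rmax; destruct Rle_dec; lra).
      assert (Htd : Rabs (t - r) < d) by (apply Rabs_def1; unfold t, Rmax; destruct Rle_dec; lra).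
      specialize (Hnear t Htd).
      apply Rabs_def2 in Hnear. specialize (Hleft t Ht). lra.
    - destruct (continuity_pt_eps f r (f r) Hcr) as [d [Hd Hnear]]; [lra|].
      assert (Hrp' : r < p) by (destruct (Req_dec r p) as [->|]; lra).
      set (s := Rmin (r + d / 2) p).
      assert (Es : E s).
      { split; [unfold s, Rmin; destruct Rle_dec; lra|].
        intros t Ht. destruct (Rlt_le_dec t r) as [Htr|Hrt]; [apply Hleft; lra|].
        assert (Htd : Rabs (t - r) < d) by (apply Rabs_def1; unfold s, Rmin in Ht; destruct Rle_dec; lra).
        specialize (Hnear t Htd).
        apply Rabs_def2 in Hnear. lra. }
      specialize (Hub s Es). unfold s, Rmin in Hub. destruct Rle_dec in Hub; lra. }
  exists r. repeat split; try assumption.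
  - destruct (Req_dec q r) as [<-|]; lra.
  - destruct (Req_dec r p) as [->|]; lra.
Qed.

Lemma first_root (f : R -> R) (q p : R) : q <> p ->
  (forall t, between q p t -> continuity_pt f t) -> 0 < f q -> f p < 0 ->
  exists r, strictly_between q p r /\ f r = 0 /\
            forall t, between q r t -> t <> r -> 0 < f t.
Proof.
  intros Hne Hcont Hq Hp. destruct (Rlt_or_le q p) as [Hqp|Hpq].
  - destruct (first_root_increasing f q p Hqp) as [r [Hr [Hroot Hpos]]]; auto.
    + intros t Ht; apply Hcont; interval.
    + exists r; repeat split; auto; try interval.
      intros t Ht Htr; apply Hpos; interval.
  - (* reflect the picture through the origin *)
    destruct (first_root_increasing (fun t => f (- t)) (- q) (- p)) as [r [Hr [Hroot Hpos]]].
    + lra.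
    + intros t Ht. apply (continuity_pt_comp Ropp f t).
      * exact (continuity_pt_opp id t (derivable_continuous_pt _ _ (derivable_pt_id t))).
      * apply Hcont; interval.
    + rewrite Ropp_involutive; exact Hq.
    + rewrite Ropp_involutive; exact Hp.
    + exists (- r); repeat split; auto; try interval.
      intros t Ht Htr. rewrite <- (Ropp_involutive t). apply Hpos; interval.
Qed.

Lemma point_near (a b d : R) : a <> b -> 0 < d ->
  exists p, strictly_between a b p /\ Rabs (p - a) < d.
Proof.
  intros Hne Hd. set (h := Rmin (d / 2) (Rabs (b - a) / 2)).
  assert (Hh : 0 < h < d /\ h < Rabs (b - a)).
  { assert (0 < Rabs (b - a)) by (apply Rabs_pos_lt; lra).
    unfold h, Rmin; destruct Rle_dec; lra. }
  destruct (Rlt_or_le a b) as [Hab|Hba].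
  - rewrite Rabs_right in Hh by lra. exists (a + h).
    split; [interval | rewrite Rabs_right; lra].
  - rewrite Rabs_left1 in Hh by lra. exists (a - h).
    split; [interval | rewrite Rabs_left; lra].
Qed.

Lemma nested_intervals (a b : nat -> R) :
  (forall n t, between (a (S n)) (b (S n)) t -> between (a n) (b n) t) ->
  exists c, forall n, between (a n) (b n) c.
Proof.
  intros Hnest.
  set (lo := fun n => Rmin (a n) (b n)). set (hi := fun n => Rmax (a n) (b n)).
  assert (Hlohi : forall n, lo n <= hi n) by (intros n; unfold lo, hi; interval).
  assert (Hstep : forall n, lo n <= lo (S n) /\ hi (S n) <= hi n).
  { intros n.
    assert (Ha := Hnest n (a (S n)) ltac:(interval)).
    assert (Hb := Hnest n (b (S n)) ltac:(interval)).
    unfold lo, hi; interval. }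
  assert (Hmono : forall n j, lo n <= lo (j + n)%nat /\ hi (j + n)%nat <= hi n).
  { intros n j; induction j as [|j IH]; simpl; [lra|].
    destruct (Hstep (j + n)%nat); lra. }
  assert (Hsep : forall n k, lo k <= hi n).
  { intros n k. destruct (Hmono k n), (Hmono n k).
    replace (n + k)%nat with (k + n)%nat in * by lia. specialize (Hlohi (k + n)%nat). lra. }
  set (E := fun y => exists n, y = lo n).
  assert (HE : bound E) by (exists (hi 0%nat); intros y [n ->]; apply Hsep).
  destruct (completeness E HE (ex_intro _ (lo 0%nat) (ex_intro _ 0%nat eq_refl)))
    as [c [Hub Hlub]].
  exists c. intros n. split.
  - apply Hub. exists n; reflexivity.
  - apply Hlub. intros y [k ->]. apply Hsep.
Qed.

Lemma dependent_choice {A : Type} (P : nat -> A -> Prop) (Rel : A -> A -> Prop) (a0 : A) :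
  P 0%nat a0 -> (forall n a, P n a -> exists b, P (S n) b /\ Rel a b) ->
  exists f : nat -> A, forall n, P n (f n) /\ Rel (f n) (f (S n)).
Proof.
  intros H0 Hstep.
  destruct (choice (fun na b => P (fst na) (snd na) -> P (S (fst na)) b /\ Rel (snd na) b))
    as [g Hg].
  { intros [n a]. simpl. destruct (classic (P n a)) as [Ha|Ha].
    - destruct (Hstep n a Ha) as [b Hb]. exists b; auto.
    - exists a; tauto. }
  set (f := fix f n := match n with O => a0 | S m => g (m, f m) end).
  assert (Hf : forall n, P n (f n)).
  { induction n as [|n IH]; [exact H0|]. exact (proj1 (Hg (n, f n) IH)). }
  exists f. intros n. split; [apply Hf|]. exact (proj2 (Hg (n, f n) (Hf n))).
Qed.

Section Shooting.

Variables (l s0 s1 sm kappa : nat -> R) (x0 : R).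
Hypothesis hl : forall n : nat, (1 <= n)%nat -> 0 < l n.
Hypothesis hs0 : forall n : nat, (1 <= n)%nat -> 0 < s0 n.
Hypothesis hs1 : forall n : nat, (1 <= n)%nat -> 0 < s1 n.
Hypothesis hsm : forall n : nat, (1 <= n)%nat -> 0 < sm n.

(* s1 k * x k * x (k+1) must equal residual k (x (k-1)) (x k). *)
Definition residual (k : nat) (a b : R) : R :=
  l k - b * (s0 k * b + sm k * a + kappa k).

Definition next (k : nat) (a b : R) : R := residual k a b / (s1 k * b).

Fixpoint orbit (t : R) (n : nat) : R * R :=
  match n with
  | O => (x0, t)
  | S m => let p := orbit t m in (snd p, next (S m) (fst p) (snd p))
  end.

Definition xs (t : R) (n : nat) : R := fst (orbit t n).

Lemma xs_SS (t : R) (n : nat) : xs t (S (S n)) = next (S n) (xs t n) (xs t (S n)).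
Proof. reflexivity. Qed.

(* The residual deciding the sign of x (n+2) when x (n+1) > 0. *)
Definition residual_at (t : R) (n : nat) : R := residual (S n) (xs t n) (xs t (S n)).

Lemma next_pos (k : nat) (a b : R) : (1 <= k)%nat -> 0 < b -> 0 < residual k a b ->
  0 < next k a b.
Proof.
  intros Hk Hb Hres. unfold next. apply Rdiv_lt_0_compat; [exact Hres|].
  apply Rmult_lt_0_compat; auto.
Qed.

Lemma next_zero (k : nat) (a b : R) : residual k a b = 0 -> next k a b = 0.
Proof. intros Hres. unfold next. rewrite Hres. unfold Rdiv. ring. Qed.

Lemma xs_equation (t : R) (n : nat) : (1 <= n)%nat -> 0 < xs t n ->
  l n = xs t n * (s1 n * xs t (S n) + s0 n * xs t n + sm n * xs t (n - 1)%nat)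
        + kappa n * xs t n.
Proof.
  intros Hn Hx. destruct n as [|k]; [lia|].
  replace (S k - 1)%nat with k by lia. rewrite xs_SS. unfold next, residual.
  pose proof (hs1 (S k) Hn). field. split; lra.
Qed.

Lemma xs_continuous (n : nat) (t : R) : (forall k, (1 <= k <= n)%nat -> xs t k <> 0) ->
  continuity_pt (fun u => xs u n) t /\ continuity_pt (fun u => xs u (S n)) t.
Proof.
  induction n as [|n IH]; intros Hnz.
  - split.
    + apply continuity_pt_const; intros ? ?; reflexivity.
    + exact (derivable_continuous_pt _ _ (derivable_pt_id t)).
  - destruct IH as [Hn HSn]; [intros k Hk; apply Hnz; lia|].
    split; [exact HSn|].
    change (continuity_pt (fun u => next (S n) (xs u n) (xs u (S n))) t).
    unfold next, residual. continuity_rules.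
    apply Rmult_integral_contrapositive_currified.
    + apply Rgt_not_eq, hs1; lia.
    + apply Hnz; lia.
Qed.

Lemma residual_at_continuous (n : nat) (t : R) :
  (forall k, (1 <= k <= n)%nat -> xs t k <> 0) -> continuity_pt (fun u => residual_at u n) t.
Proof.
  intros Hnz. destruct (xs_continuous n t Hnz) as [Hn HSn].
  unfold residual_at, residual. continuity_rules.
Qed.

Lemma residual_negative_of_large (k : nat) (Y : R) : (1 <= k)%nat ->
  exists W, 0 < W /\ forall a b, Y < a -> W < b -> residual k a b < 0.
Proof.
  intros Hk. pose proof (hl k Hk). pose proof (hs0 k Hk). pose proof (hsm k Hk).
  set (c := Rabs (sm k * Y + kappa k)).
  assert (Hc : - c <= sm k * Y + kappa k).
  { unfold c. rewrite <- Rabs_Ropp. pose proof (Rle_abs (- (sm k * Y + kappa k))). lra. }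
  assert (HW : 0 < (c + l k) / s0 k).
  { apply Rdiv_lt_0_compat; [pose proof (Rabs_pos (sm k * Y + kappa k)); unfold c|]; lra. }
  exists ((c + l k) / s0 k + 1). split; [lra|].
  intros a b Ha Hb.
  assert (Hs0b : c + l k + s0 k < s0 k * b).
  { replace (c + l k + s0 k) with (s0 k * ((c + l k) / s0 k + 1)) by (field; lra).
    apply Rmult_lt_compat_l; lra. }
  assert (Hinner : l k + s0 k < s0 k * b + sm k * a + kappa k).
  { assert (sm k * Y < sm k * a) by (apply Rmult_lt_compat_l; lra). lra. }
  assert (Hb1 : 1 < b) by lra.
  unfold residual. nra.
Qed.

Lemma next_large_near_zero (k : nat) (A M : R) : (1 <= k)%nat ->
  exists eps, 0 < eps /\ forall a b, 0 < b < eps -> a < A -> M < next k a b.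
Proof.
  intros Hk. pose proof (hl k Hk). pose proof (hs0 k Hk). pose proof (hs1 k Hk).
  pose proof (hsm k Hk).
  set (B := s0 k + sm k * Rabs A + Rabs (kappa k) + s1 k * Rabs M + 1).
  assert (HB : 1 <= B).
  { pose proof (Rabs_pos A). pose proof (Rabs_pos (kappa k)). pose proof (Rabs_pos M).
    unfold B. nra. }
  exists (Rmin 1 (l k / B)). split.
  { apply Rmin_glb_lt; [lra | apply Rdiv_lt_0_compat; lra]. }
  intros a b [Hb Heps] Ha.
  assert (Hb1 : b < 1) by (pose proof (Rmin_l 1 (l k / B)); lra).
  assert (HbB : b * B < l k).
  { pose proof (Rmin_r 1 (l k / B)).
    replace (l k) with (l k / B * B) by (field; lra).
    apply Rmult_lt_compat_r; lra. }
  assert (Hs1b : 0 < s1 k * b) by (apply Rmult_lt_0_compat; lra).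
  assert (Hsmall : b * (s0 k * b + sm k * a + kappa k) + M * (s1 k * b) < b * B).
  { assert (sm k * a < sm k * Rabs A) by (apply Rmult_lt_compat_l; [lra|]; pose proof (Rle_abs A); lra).
    pose proof (Rle_abs (kappa k)). pose proof (Rle_abs M).
    assert (b * (s0 k * b) < b * s0 k) by (apply Rmult_lt_compat_l; nra).
    assert (b * (sm k * a) < b * (sm k * Rabs A)) by (apply Rmult_lt_compat_l; lra).
    assert (b * kappa k <= b * Rabs (kappa k)) by (apply Rmult_le_compat_l; lra).
    assert (M * (s1 k * b) <= Rabs M * (s1 k * b)) by (apply Rmult_le_compat_r; lra).
    unfold B. lra. }
  apply (Rmult_lt_reg_r (s1 k * b)); [exact Hs1b|].
  unfold next. replace (residual k a b / (s1 k * b) * (s1 k * b)) with (residual k a b) by (field; lra).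
  unfold residual. lra.
Qed.

Record bracket (n : nat) (e0 e1 : R) : Prop := {
  bracket_distinct : e0 <> e1;
  bracket_pos : forall t, between e0 e1 t -> forall k, (1 <= k <= n)%nat -> 0 < xs t k;
  bracket_root0 : xs e0 (S n) = 0;
  bracket_pos1 : forall t, between e0 e1 t -> t <> e0 -> 0 < xs t (S n);
  bracket_pos2 : forall t, strictly_between e0 e1 t -> 0 < xs t (S (S n));
  bracket_root1 : xs e1 (S (S n)) = 0 }.

Lemma residual_negative_near_root (n : nat) (e0 e1 : R) : bracket n e0 e1 ->
  exists p, strictly_between e0 e1 p /\ residual_at p (S n) < 0.
Proof.
  intros [Hne Hpos Hroot0 Hpos1 _ _].
  destruct (residual_negative_of_large (S (S n)) 0) as [W [HW HresW]]; [lia|].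
  set (A := Rabs (xs e0 n) + 1).
  destruct (next_large_near_zero (S n) A W) as [eps [Heps Hlarge]]; [lia|].
  destruct (xs_continuous n e0) as [Hcn HcSn].
  { intros k Hk. apply Rgt_not_eq, Hpos; [interval | exact Hk]. }
  destruct (continuity_pt_eps _ _ eps HcSn Heps) as [d1 [Hd1 Hnear1]].
  destruct (continuity_pt_eps _ _ 1 Hcn Rlt_0_1) as [d2 [Hd2 Hnear2]].
  destruct (point_near e0 e1 (Rmin d1 d2) Hne) as [p [Hp Hpd]].
  { apply Rmin_glb_lt; assumption. }
  pose proof (Rmin_l d1 d2). pose proof (Rmin_r d1 d2).
  assert (Hy : 0 < xs p (S n) < eps).
  { split; [apply Hpos1; interval|].
    specialize (Hnear1 p ltac:(lra)). rewrite Hroot0 in Hnear1.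
    apply Rabs_def2 in Hnear1. lra. }
  assert (Hz : xs p n < A).
  { specialize (Hnear2 p ltac:(lra)). apply Rabs_def2 in Hnear2.
    pose proof (Rle_abs (xs e0 n)). unfold A. lra. }
  exists p. split; [exact Hp|].
  apply HresW; [lra|]. rewrite xs_SS. apply Hlarge; assumption.
Qed.

(* The first bracket starts at t = 0, where x 1 = t vanishes. *)
Lemma bracket_base : exists e1, bracket 0 0 e1.
Proof.
  destruct (residual_negative_of_large 1 (x0 - 1)) as [W [HW HresW]]; [lia|].
  assert (Hstart : 0 < residual_at 0 0).
  { unfold residual_at, residual. change (xs 0 1) with 0. pose proof (hl 1 (le_n 1)). lra. }
  assert (Hend : residual_at (W + 1) 0 < 0) by (apply HresW; unfold xs; simpl; lra).
  destruct (first_root (fun u => residual_at u 0) 0 (W + 1)) as [r [Hr [Hroot Hpos]]];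
    try assumption.
  { lra. }
  { intros t _. apply residual_at_continuous. intros k Hk; lia. }
  exists r. split.
  - interval.
  - intros t _ k Hk; lia.
  - reflexivity.
  - intros t Ht Ht0. change (0 < t). interval.
  - intros t Ht. rewrite xs_SS. apply next_pos; [lia | change (0 < t); interval|].
    apply Hpos; interval.
  - rewrite xs_SS. apply next_zero. exact Hroot.
Qed.

Lemma bracket_step (n : nat) (e0 e1 : R) : bracket n e0 e1 ->
  exists e2, bracket (S n) e1 e2 /\ (forall t, between e1 e2 t -> between e0 e1 t).
Proof.
  intros Hb. destruct (residual_negative_near_root n e0 e1 Hb) as [p [Hp Hneg]].
  destruct Hb as [Hne Hpos Hroot0 Hpos1 Hpos2 Hroot1].
  assert (Hinside : forall t, between e1 p t -> forall k, (1 <= k <= S n)%nat -> 0 < xs t k).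
  { intros t Ht k Hk. destruct (Nat.eq_dec k (S n)) as [->|Hkn].
    - apply Hpos1; interval.
    - apply Hpos; [interval | lia]. }
  assert (Hstart : 0 < residual_at e1 (S n)).
  { unfold residual_at, residual. rewrite Hroot1. pose proof (hl (S (S n)) ltac:(lia)). lra. }
  destruct (first_root (fun u => residual_at u (S n)) e1 p) as [r [Hr [Hroot Hres]]];
    try assumption.
  { interval. }
  { intros t Ht. apply residual_at_continuous. intros k Hk.
    apply Rgt_not_eq, (Hinside t Ht k Hk). }
  exists r. split; [split|].
  - interval.
  - intros t Ht. apply Hinside. interval.
  - exact Hroot1.
  - intros t Ht Hte1. apply Hpos2. interval.
  - intros t Ht. rewrite xs_SS. apply next_pos; [lia | apply Hpos2; interval |].
    apply Hres; interval.
  - rewrite xs_SS. apply next_zero. exact Hroot.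
  - intros t Ht. interval.
Qed.

Lemma positive_shot_exists : exists t, forall n, (1 <= n)%nat -> 0 < xs t n.
Proof.
  destruct bracket_base as [e1 Hbase].
  destruct (dependent_choice (fun n I => bracket n (fst I) (snd I))
              (fun I J => forall t, between (fst J) (snd J) t -> between (fst I) (snd I) t)
              (0, e1) Hbase) as [I HI].
  { intros n [a b] Hab. destruct (bracket_step n a b Hab) as [c Hc]. exists (b, c); exact Hc. }
  destruct (nested_intervals (fun n => fst (I n)) (fun n => snd (I n))) as [t Ht].
  { intros n. exact (proj2 (HI n)). }
  exists t. intros n Hn. apply (bracket_pos _ _ _ (proj1 (HI n)) t (Ht n)). lia.
Qed.

End Shooting.

Theorem theorem4p1 (l s0 s1 sm kappa : nat -> R)
  (hl : forall n : nat, (1 <= n)%nat -> 0 < l n)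
  (hs0 : forall n : nat, (1 <= n)%nat -> 0 < s0 n)
  (hs1 : forall n : nat, (1 <= n)%nat -> 0 < s1 n)
  (hsm : forall n : nat, (1 <= n)%nat -> 0 < sm n)
  (x0 : R) :
  exists x : nat -> R,
    x 0%nat = x0 /\
    (forall n : nat, (1 <= n)%nat -> 0 < x n) /\
    (forall n : nat, (1 <= n)%nat ->
       l n = x n * (s1 n * x (S n) + s0 n * x n + sm n * x (n - 1)%nat)
             + kappa n * x n).
Proof.
  destruct (positive_shot_exists l s0 s1 sm kappa x0 hl hs0 hs1 hsm) as [t Hpos].
  exists (xs l s0 s1 sm kappa x0 t). split; [reflexivity|]. split; [exact Hpos|].
  intros n Hn. apply xs_equation; auto.
Qed.
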